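(* Let $1\le n\le N$, $k\ge0$, $E\in\mathbb R$, $\mathbf u\in\mathbb Z^{nd}$ and $\kappa(n)=n^n$. If $M(\mathbf C^{(n)}_{L_{k+1}}(\mathbf u),E)\ge\kappa(n)+2$, then $M^{\mathrm{sep}}(\mathbf C^{(n)}_{L_{k+1}}(\mathbf u),E)\ge2$. Similarly, if $M_{\mathrm{PI}}(\mathbf C^{(n)}_{L_{k+1}}(\mathbf u),E)\ge\kappa(n)+2$, then $M^{\mathrm{sep}}_{\mathrm{PI}}(\mathbf C^{(n)}_{L_{k+1}}(\mathbf u),E)\ge2$.
   Context: Max-norm cubes $\mathbf C^{(n)}_L(\mathbf u)=\{\mathbf x\in\mathbb R^{nd}:|\mathbf x-\mathbf u|<L\}$, $\mathbf u\in\mathbb Z^{nd}$. Scales $L_0>3$, $L_k=\lfloor L_{k-1}^{3/2}\rfloor+1$. Given $m>0$, ''$(E,m)$-singular'' refers to a fixed property of cubes (failure of the resolvent decay bound $\|\mathbf 1_{\mathbf C^{(n,out)}_L}\mathbf G^{(n)}_{\mathbf C^{(n)}_L}(E)\mathbf 1_{\mathbf C^{(n,int)}_L}\|\le e^{-\gamma(m,L,n)L}$ or $E\in\sigma$); only the counting structure matters here. Separability: $\mathbf C^{(n)}_L(\mathbf x)$ is $\mathcal J$-separable from $\mathbf C^{(n)}_L(\mathbf y)$ if $\emptyset\ne\mathcal J\subset\{1,..,n\}$ and $\bigcup_{j\in\mathcal J}C^{(1)}_L(x_j)$ is disjoint from $\bigcup_{j\notin\mathcal J}C^{(1)}_L(x_j)\cup\bigcup_jC^{(1)}_L(y_j)$;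 a pair is separable if $|\mathbf x-\mathbf y|>7NL$ and one is $\mathcal J$-separable from the other. A cube is partially interactive (PI) if $\max_{i\ne j}|u_i-u_j|>n(2L+r_0)$. Counts: $M(\mathbf C^{(n)}_{L_{k+1}}(\mathbf u),E)$ is the maximal number of $(E,m)$-singular cubes $\mathbf C^{(n)}_{L_k}(\mathbf u^{(j)})\subset\mathbf C^{(n)}_{L_{k+1}}(\mathbf u)$ with $\mathbf u^{(j)}\in\mathbb Z^{nd}$, $\operatorname{dist}(\mathbf u^{(j)},\partial\mathbf C^{(n)}_{L_{k+1}}(\mathbf u))\ge2L_k$ and $|\mathbf u^{(j)}-\mathbf u^{(j')}|>7NL_k$ for $j\ne j'$; $M^{\mathrm{sep}}$ is the maximal number of pairwise separable $(E,m)$-singular cubes $\mathbf C^{(n)}_{L_k}(\mathbf u^{(j)})\subset\mathbf C^{(n)}_{L_{k+1}}(\mathbf u)$; $M_{\mathrm{PI}}$ is the maximal number of $(E,m)$-singular PI cubes $\mathbf C^{(n)}_{L_k}(\mathbf u^{(j)})\subset\mathbf C^{(n)}_{L_{k+1}}(\mathbf u)$ with $|\mathbf u^{(j)}-\mathbf u^{(j')}|>7NL_k$ for $j\ne j'$; $M^{\mathrm{sep}}_{\mathrm{PI}}$ is the maximal number of pairwise separable $(E,m)$-singular PI cubes $\mathbf C^{(n)}_{L_k}(\mathbf u^{(j)})\subset\mathbf C^{(n)}_{L_{k+1}}(\mathbf u)$. *)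

From Stdlib Require Import Reals ZArith Arith.
Open Scope R_scope.

(* A configuration u in Z^{nd}: u j i is the i-th coordinate (i < d) of
   particle j (j < n).  Points of R^{nd} are encoded likewise. *)
Definition config := nat -> nat -> Z.
Definition point := nat -> nat -> R.

Definition zr (u : config) : point := fun j i => IZR (u j i).

(* max over indices 0..m-1 (0 for the empty range; used on nonnegative values) *)
Fixpoint maxi (m : nat) (f : nat -> R) : R :=
  match m with
  | O => 0
  | S m' => Rmax (maxi m' f) (f m')
  end.

Definition norm1 (d : nat) (v : nat -> R) : R := maxi d (fun i => Rabs (v i)).
Definition normn (n d : nat) (x : point) : R := maxi n (fun j => norm1 d (x j)).

Definition diffp (x y : point) : point := fun j i => x j i - y j i.

Definition cube (n d : nat) (L : R) (u : point) (x : point) : Prop :=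
  normn n d (diffp x u) < L.

Definition cube1 (d : nat) (L : R) (a z : nat -> R) : Prop :=
  norm1 d (fun i => z i - a i) < L.

Definition bdry (n d : nat) (L : R) (u : point) (x : point) : Prop :=
  normn n d (diffp x u) = L.

Definition dist_bdry_ge (n d : nat) (L : R) (u v : point) (r : R) : Prop :=
  forall y, bdry n d L u y -> r <= normn n d (diffp y v).

Definition cube_sub (n d : nat) (L1 : R) (v : point) (L2 : R) (u : point) : Prop :=
  forall x, cube n d L1 v x -> cube n d L2 u x.

Fixpoint scale (L0 : R) (k : nat) : R :=
  match k with
  | O => L0
  | S k' => IZR (Int_part (Rpower (scale L0 k') (3/2))) + 1
  end.

Definition kappa (n : nat) : nat := Nat.pow n n.

Definition Jsep (n d : nat) (L : R) (x y : config) (J : nat -> Prop) : Prop :=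
  (exists j, (j < n)%nat /\ J j) /\
  forall z : nat -> R,
    ~ ((exists j, (j < n)%nat /\ J j /\ cube1 d L (zr x j) z) /\
       ((exists j, (j < n)%nat /\ ~ J j /\ cube1 d L (zr x j) z) \/
        (exists j, (j < n)%nat /\ cube1 d L (zr y j) z))).

Definition sep_pair (N n d : nat) (L : R) (x y : config) : Prop :=
  normn n d (diffp (zr x) (zr y)) > 7 * INR N * L /\
  ((exists J, Jsep n d L x y J) \/ (exists J, Jsep n d L y x J)).

Definition PI (n d : nat) (r0 L : R) (u : config) : Prop :=
  exists i j, (i < n)%nat /\ (j < n)%nat /\ i <> j /\
    norm1 d (fun c => zr u i c - zr u j c) > INR n * (2 * L + r0).

(* The abstract "(E,m)-singular" property (m fixed): sing n E v L means the
   cube C^{(n)}_L(v) is (E,m)-singular. *)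
Definition singT := nat -> R -> config -> R -> Prop.

Definition M_ge (sing : singT) (N n d : nat) (L0 : R) (k : nat) (E : R)
    (u : config) (K : nat) : Prop :=
  exists f : nat -> config,
    (forall p, (p < K)%nat ->
       sing n E (f p) (scale L0 k) /\
       cube_sub n d (scale L0 k) (zr (f p)) (scale L0 (S k)) (zr u) /\
       dist_bdry_ge n d (scale L0 (S k)) (zr u) (zr (f p)) (2 * scale L0 k)) /\
    (forall p q, (p < K)%nat -> (q < K)%nat -> p <> q ->
       normn n d (diffp (zr (f p)) (zr (f q))) > 7 * INR N * scale L0 k).

Definition Msep_ge (sing : singT) (N n d : nat) (L0 : R) (k : nat) (E : R)
    (u : config) (K : nat) : Prop :=
  exists f : nat -> config,
    (forall p, (p < K)%nat ->
       sing n E (f p) (scale L0 k) /\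
       cube_sub n d (scale L0 k) (zr (f p)) (scale L0 (S k)) (zr u)) /\
    (forall p q, (p < K)%nat -> (q < K)%nat -> p <> q ->
       sep_pair N n d (scale L0 k) (f p) (f q)).

Definition MPI_ge (sing : singT) (N n d : nat) (r0 L0 : R) (k : nat) (E : R)
    (u : config) (K : nat) : Prop :=
  exists f : nat -> config,
    (forall p, (p < K)%nat ->
       sing n E (f p) (scale L0 k) /\ PI n d r0 (scale L0 k) (f p) /\
       cube_sub n d (scale L0 k) (zr (f p)) (scale L0 (S k)) (zr u)) /\
    (forall p q, (p < K)%nat -> (q < K)%nat -> p <> q ->
       normn n d (diffp (zr (f p)) (zr (f q))) > 7 * INR N * scale L0 k).

Definition MPIsep_ge (sing : singT) (N n d : nat) (r0 L0 : R) (k : nat) (E : R)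
    (u : config) (K : nat) : Prop :=
  exists f : nat -> config,
    (forall p, (p < K)%nat ->
       sing n E (f p) (scale L0 k) /\ PI n d r0 (scale L0 k) (f p) /\
       cube_sub n d (scale L0 k) (zr (f p)) (scale L0 (S k)) (zr u)) /\
    (forall p q, (p < K)%nat -> (q < K)%nat -> p <> q ->
       sep_pair N n d (scale L0 k) (f p) (f q)).

(* A cube C_L(y) that is not separable from C_L(x) has each of its particles
   within distance 2nL of some particle of x: around y_l, among the n shells of
   width 2L one contains no particle of y, and the particles enclosed by it form a
   candidate J; non-separability forces their one-particle cubes to meet a cube
   of x.  Choosing such a particle of x for every l gives one of n^n maps, so
   among kappa(n) + 1 non-separable cubes two share the same map and lie within
   4nL <= 7NL of each other, contradicting the distance constraint. *)

From Pilot Require Import Defs.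
From Stdlib Require Import Reals Lia Lra Classical.
Open Scope R_scope.

Lemma maxi_ge0 m f : 0 <= maxi m f.
Proof. induction m; simpl; [lra|]. eapply Rle_trans; [exact IHm | apply Rmax_l]. Qed.

Lemma le_maxi m f i : (i < m)%nat -> f i <= maxi m f.
Proof.
  induction m; intros Hi; [lia|]; simpl.
  destruct (Nat.eq_dec i m) as [->|Hne]; [apply Rmax_r|].
  eapply Rle_trans; [apply IHm; lia | apply Rmax_l].
Qed.

Lemma maxi_le m f c : 0 <= c -> (forall i, (i < m)%nat -> f i <= c) -> maxi m f <= c.
Proof.
  induction m; intros Hc Hf; simpl; [lra|].
  apply Rmax_lub; [apply IHm; auto | apply Hf; lia].
Qed.

Lemma maxi_lt m f c : 0 < c -> (forall i, (i < m)%nat -> f i < c) -> maxi m f < c.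
Proof.
  induction m; intros Hc Hf; simpl; [lra|].
  apply Rmax_lub_lt; [apply IHm; auto | apply Hf; lia].
Qed.

Definition dist1 (d : nat) (a b : nat -> R) : R := norm1 d (fun i => a i - b i).

Lemma dist1_ge0 d a b : 0 <= dist1 d a b.
Proof. apply maxi_ge0. Qed.

Lemma dist1_triangle d a b c : dist1 d a c <= dist1 d a b + dist1 d b c.
Proof.
  apply maxi_le; [pose proof (dist1_ge0 d a b); pose proof (dist1_ge0 d b c); lra|].
  intros i Hi.
  pose proof (le_maxi d (fun i => Rabs (a i - b i)) i Hi).
  pose proof (le_maxi d (fun i => Rabs (b i - c i)) i Hi).
  pose proof (Rabs_triang (a i - b i) (b i - c i)).
  replace (a i - c i) with ((a i - b i) + (b i - c i)) by ring.
  unfold dist1, norm1; lra.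
Qed.

Lemma dist1_le_sym d a b : dist1 d a b <= dist1 d b a.
Proof.
  apply maxi_le; [apply dist1_ge0|]. intros i Hi.
  rewrite Rabs_minus_sym. exact (le_maxi d (fun i => Rabs (b i - a i)) i Hi).
Qed.

Lemma dist1_sym d a b : dist1 d a b = dist1 d b a.
Proof. apply Rle_antisym; apply dist1_le_sym. Qed.

Lemma dist1_refl d a : dist1 d a a = 0.
Proof.
  apply Rle_antisym; [|apply dist1_ge0].
  apply maxi_le; [lra|]. intros i _. rewrite Rminus_diag, Rabs_R0. lra.
Qed.

Lemma dist1_lt_of_cube1 d L a b z : cube1 d L a z -> cube1 d L b z -> dist1 d a b < 2 * L.
Proof.
  intros Ha Hb. pose proof (dist1_triangle d a z b) as Htri.
  rewrite (dist1_sym d a z) in Htri. unfold cube1, dist1 in *. lra.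
Qed.

Lemma finite_choice (A : Type) (a0 : A) (P : nat -> A -> Prop) n :
  (forall t, (t < n)%nat -> exists a, P t a) ->
  exists g : nat -> A, forall t, (t < n)%nat -> P t (g t).
Proof.
  induction n as [|n IHn]; intros HP; [exists (fun _ => a0); lia|].
  destruct IHn as [g Hg]; [intros t Ht; apply HP; lia|].
  destruct (HP n (Nat.lt_succ_diag_r n)) as [a Ha].
  exists (fun t => if Nat.eqb t n then a else g t). intros t Ht.
  destruct (Nat.eqb_spec t n) as [->|Hne]; [exact Ha | apply Hg; lia].
Qed.

Lemma pigeonhole K (g : nat -> nat) : (forall p, (p <= K)%nat -> (g p < K)%nat) ->
  exists p q, (p < q <= K)%nat /\ g p = g q.
Proof.
  revert g; induction K as [|K IHK]; intros g Hg; [specialize (Hg 0%nat (le_n 0)); lia|].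
  destruct (classic (exists p, (p <= K)%nat /\ g p = g (S K))) as [[p [Hp Heq]]|Hno].
  { exists p, (S K); split; [lia | exact Heq]. }
  (* Redirect the value K to g (S K), which is then a fresh value below K. *)
  set (h := fun p => if Nat.eq_dec (g p) K then g (S K) else g p).
  destruct (IHK h) as [p [q [Hpq Hh]]].
  - intros p Hp. unfold h. destruct (Nat.eq_dec (g p) K) as [E|E].
    + assert (g (S K) <> K) by (intro E2; apply Hno; exists p; split; [lia | congruence]).
      pose proof (Hg (S K) (le_n _)). lia.
    + pose proof (Hg p ltac:(lia)). lia.
  - exists p, q. split; [lia|]. unfold h in Hh.
    destruct (Nat.eq_dec (g p) K), (Nat.eq_dec (g q) K); try congruence.
    + exfalso; apply Hno; exists q; split; [lia | congruence].
    + exfalso; apply Hno; exists p; split; [lia | congruence].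
Qed.

Lemma pigeonhole_avoid n l (g : nat -> nat) : (l < n)%nat ->
  (forall t, (t < n)%nat -> (g t < n)%nat /\ g t <> l) ->
  exists p q, (p < q < n)%nat /\ g p = g q.
Proof.
  intros Hl Hg.
  set (h := fun t => if Nat.ltb (g t) l then g t else (g t - 1)%nat).
  destruct (pigeonhole (n - 1) h) as [p [q [Hpq Hh]]].
  - intros p Hp. destruct (Hg p ltac:(lia)). unfold h.
    destruct (Nat.ltb_spec (g p) l); lia.
  - exists p, q. split; [lia|]. unfold h in Hh.
    destruct (Hg p ltac:(lia)), (Hg q ltac:(lia)).
    destruct (Nat.ltb_spec (g p) l), (Nat.ltb_spec (g q) l); lia.
Qed.

(* D l = 0 lies in none of the n shells, so at most n - 1 of them are occupied. *)
Lemma exists_empty_shell n w l (D : nat -> R) : 0 < w -> (l < n)%nat -> D l = 0 ->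
  exists t, (t < n)%nat /\
    forall j, (j < n)%nat -> ~ (w * INR t < D j /\ D j <= w * INR (S t)).
Proof.
  intros Hw Hl HDl. apply NNPP; intro Hnone.
  destruct (finite_choice nat 0%nat
              (fun t j => (j < n)%nat /\ w * INR t < D j /\ D j <= w * INR (S t)) n)
    as [g Hg].
  { intros t Ht. apply NNPP; intro Hempty. apply Hnone. exists t. split; [exact Ht|].
    intros j Hj Hin. apply Hempty. exists j. auto. }
  destruct (pigeonhole_avoid n l g Hl) as [p [q [Hpq Hgpq]]].
  - intros t Ht. destruct (Hg t Ht) as [Hgt [Hlow _]]. split; [exact Hgt|].
    intro E. rewrite E, HDl in Hlow.
    pose proof (pos_INR t). pose proof (Rmult_le_pos w (INR t)). lra.
  - destruct (Hg p ltac:(lia)) as [_ [_ Hup]]. destruct (Hg q ltac:(lia)) as [_ [Hlow _]].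
    rewrite <- Hgpq in Hlow.
    assert (INR (S p) <= INR q) by (apply le_INR; lia).
    pose proof (Rmult_le_compat_l w _ _ (Rlt_le _ _ Hw) H). lra.
Qed.

Lemma particle_near_of_not_Jsep n d L (x y : config) l : 0 < L -> (l < n)%nat ->
  ~ (exists J, Jsep n d L y x J) ->
  exists m, (m < n)%nat /\ dist1 d (zr y l) (zr x m) < 2 * L * INR n.
Proof.
  intros HL Hl Hns.
  set (D := fun j => dist1 d (zr y j) (zr y l)).
  destruct (exists_empty_shell n (2 * L) l D ltac:(lra) Hl (dist1_refl d (zr y l)))
    as [t [Ht Hshell]].
  (* J := the particles of y enclosed by the empty shell; the gap keeps their
     cubes away from the cubes of the other particles of y. *)
  assert (HJ : ~ Jsep n d L y x (fun j => D j <= 2 * L * INR t))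
    by (intro; apply Hns; eauto).
  assert (Hnn : 0 <= 2 * L * INR t)
    by (pose proof (pos_INR t); apply Rmult_le_pos; lra).
  apply not_and_or in HJ as [HJ|HJ].
  { exfalso; apply HJ. exists l. split; [exact Hl|]. unfold D; rewrite dist1_refl. exact Hnn. }
  apply not_all_ex_not in HJ as [z Hz]. apply NNPP in Hz.
  destruct Hz as [[j [Hj [HJj Hzj]]] [[j' [Hj' [HJj' Hzj']]] | [m [Hm Hzm]]]].
  - exfalso. apply Rnot_le_lt in HJj'. pose proof (dist1_lt_of_cube1 d L _ _ z Hzj' Hzj).
    pose proof (dist1_triangle d (zr y j') (zr y j) (zr y l)).
    apply (Hshell j' Hj'). fold (D j') (D j) in *. rewrite S_INR. split; lra.
  - exists m. split; [exact Hm|].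
    pose proof (dist1_lt_of_cube1 d L _ _ z Hzj Hzm).
    pose proof (dist1_triangle d (zr y l) (zr y j) (zr x m)).
    rewrite (dist1_sym d (zr y l) (zr y j)) in *. fold (D j) in *.
    assert (INR (S t) <= INR n) by (apply le_INR; lia).
    rewrite S_INR in *. nra.
Qed.

Lemma normn_lt_of_common_anchor n d r (a b x : point) (m : nat -> nat) : 0 < r ->
  (forall l, (l < n)%nat -> dist1 d (a l) (x (m l)) < r) ->
  (forall l, (l < n)%nat -> dist1 d (b l) (x (m l)) < r) ->
  normn n d (diffp a b) < 2 * r.
Proof.
  intros Hr Ha Hb. apply maxi_lt; [lra|]. intros l Hl.
  change (dist1 d (a l) (b l) < 2 * r).
  pose proof (dist1_triangle d (a l) (x (m l)) (b l)).
  rewrite (dist1_sym d (x (m l))) in *. pose proof (Ha l Hl). pose proof (Hb l Hl). lra.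
Qed.

Fixpoint digits_code (n a : nat) (m : nat -> nat) : nat :=
  match a with
  | O => O
  | S a' => (digits_code n a' m + m a' * n ^ a')%nat
  end.

Lemma digits_code_lt n a m : (forall l, (l < a)%nat -> (m l < n)%nat) ->
  (digits_code n a m < n ^ a)%nat.
Proof.
  induction a as [|a IHa]; intros Hm; simpl; [lia|].
  pose proof (IHa ltac:(intros; apply Hm; lia)). pose proof (Hm a (le_n _)).
  assert ((m a + 1) * n ^ a <= n * n ^ a)%nat by (apply Nat.mul_le_mono_r; lia).
  nia.
Qed.

Lemma digits_code_inj n a m m' : (forall l, (l < a)%nat -> (m l < n)%nat) ->
  (forall l, (l < a)%nat -> (m' l < n)%nat) -> digits_code n a m = digits_code n a m' ->
  forall l, (l < a)%nat -> m l = m' l.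
Proof.
  induction a as [|a IHa]; intros Hm Hm' E l Hl; [lia|]. simpl in E.
  pose proof (digits_code_lt n a m ltac:(intros; apply Hm; lia)).
  pose proof (digits_code_lt n a m' ltac:(intros; apply Hm'; lia)).
  assert (Hpow : (n ^ a <> 0)%nat) by lia.
  assert (Ea : m a = m' a).
  { apply (f_equal (fun c => c / n ^ a)%nat) in E.
    rewrite !Nat.div_add, !Nat.div_small in E by assumption. lia. }
  destruct (Nat.eq_dec l a) as [->|Hne]; [exact Ea|].
  apply IHa; try (intros; first [apply Hm | apply Hm']; lia); lia.
Qed.

Lemma exists_Jsep_among n d L (x : config) (f : nat -> config) : 0 < L -> (1 <= n)%nat ->
  (forall p q, (p < kappa n + 1)%nat -> (q < kappa n + 1)%nat -> p <> q ->
     4 * INR n * L <= normn n d (diffp (zr (f p)) (zr (f q)))) ->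
  exists p, (p < kappa n + 1)%nat /\ exists J, Jsep n d L (f p) x J.
Proof.
  intros HL Hn Hfar. apply NNPP; intro Hnone.
  set (near p m := (forall l, (l < n)%nat -> (m l < n)%nat) /\
         forall l, (l < n)%nat -> dist1 d (zr (f p) l) (zr x (m l)) < 2 * L * INR n).
  destruct (finite_choice (nat -> nat) (fun _ => 0%nat) near (kappa n + 1)) as [M HM].
  { intros p Hp.
    assert (Hns : ~ exists J, Jsep n d L (f p) x J) by (intro; apply Hnone; eauto).
    destruct (finite_choice nat 0%nat (fun l m => (m < n)%nat /\
                dist1 d (zr (f p) l) (zr x m) < 2 * L * INR n) n) as [m Hm].
    { intros l Hl. exact (particle_near_of_not_Jsep n d L x (f p) l HL Hl Hns). }
    exists m. split; intros l Hl; apply Hm, Hl. }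
  destruct (pigeonhole (kappa n) (fun p => digits_code n n (M p))) as [p [q [Hpq Hcode]]].
  { intros p Hp. apply digits_code_lt, HM. lia. }
  destruct (HM p ltac:(lia)) as [HMp Hp], (HM q ltac:(lia)) as [HMq Hq].
  pose proof (digits_code_inj n n _ _ HMp HMq Hcode) as Hsame.
  assert (Hr : 0 < 2 * L * INR n) by (pose proof (le_INR 1 n Hn); simpl in *; nra).
  assert (Hp' : forall l, (l < n)%nat -> dist1 d (zr (f p) l) (zr x (M q l)) < 2 * L * INR n)
    by (intros l Hl; rewrite <- Hsame by exact Hl; exact (Hp l Hl)).
  pose proof (normn_lt_of_common_anchor n d _ _ _ _ (M q) Hr Hp' Hq).
  pose proof (Hfar p q ltac:(lia) ltac:(lia) ltac:(lia)). lra.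
Qed.

Lemma exists_separable_partner N n d L (f : nat -> config) :
  0 < L -> (1 <= n)%nat -> (n <= N)%nat ->
  (forall p q, (p < kappa n + 2)%nat -> (q < kappa n + 2)%nat -> p <> q ->
     normn n d (diffp (zr (f p)) (zr (f q))) > 7 * INR N * L) ->
  exists p, (1 <= p <= kappa n + 1)%nat /\
    sep_pair N n d L (f 0%nat) (f p) /\ sep_pair N n d L (f p) (f 0%nat).
Proof.
  intros HL Hn HnN Hfar.
  assert (H4n : 4 * INR n * L <= 7 * INR N * L).
  { pose proof (le_INR n N HnN). pose proof (pos_INR n). nra. }
  destruct (exists_Jsep_among n d L (f 0%nat) (fun p => f (S p)) HL Hn) as [p [Hp HJ]].
  { intros p q Hp Hq Hpq. pose proof (Hfar (S p) (S q) ltac:(lia) ltac:(lia) ltac:(lia)). lra. }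
  exists (S p). split; [lia|].
  split; (split; [apply Hfar; lia | tauto]).
Qed.

Lemma two_element_family (P : config -> Prop) (Rel : config -> config -> Prop) x y :
  P x -> P y -> Rel x y -> Rel y x ->
  exists f : nat -> config, (forall p, (p < 2)%nat -> P (f p)) /\
    (forall p q, (p < 2)%nat -> (q < 2)%nat -> p <> q -> Rel (f p) (f q)).
Proof.
  intros Px Py Rxy Ryx. exists (fun p => if Nat.eqb p 0 then x else y). split.
  - intros [|[|p]] Hp; simpl; tauto || lia.
  - intros [|[|p]] [|[|q]] Hp Hq Hpq; simpl; tauto || lia.
Qed.

Lemma scale_pos L0 k : 0 < L0 -> 0 < scale L0 k.
Proof.
  intros HL0. induction k as [|k IHk]; simpl; [exact HL0|].
  destruct (base_Int_part (Rpower (scale L0 k) (3 / 2))) as [_ Hfloor].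
  assert (0 < Rpower (scale L0 k) (3 / 2)) by apply exp_pos.
  lra.
Qed.

Theorem mainTheorem13 (d N n k : nat) (L0 r0 E : R) (sing : singT) (u : config) :
  (1 <= d)%nat -> 3 < L0 -> (1 <= n)%nat -> (n <= N)%nat ->
  (M_ge sing N n d L0 k E u (kappa n + 2) -> Msep_ge sing N n d L0 k E u 2) /\
  (MPI_ge sing N n d r0 L0 k E u (kappa n + 2) -> MPIsep_ge sing N n d r0 L0 k E u 2).
Proof.
  intros _ HL0 Hn HnN. assert (HL : 0 < scale L0 k) by (apply scale_pos; lra).
  split; intros [f [Hf Hfar]];
    destruct (exists_separable_partner N n d _ f HL Hn HnN Hfar) as [p [Hp [Hsep0p Hsepp0]]].
  - apply (two_element_family
             (fun v => sing n E v (scale L0 k) /\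
                       cube_sub n d (scale L0 k) (zr v) (scale L0 (S k)) (zr u))
             (sep_pair N n d (scale L0 k)) (f 0%nat) (f p)); try assumption.
    + destruct (Hf 0%nat ltac:(lia)) as [? [? _]]; split; assumption.
    + destruct (Hf p ltac:(lia)) as [? [? _]]; split; assumption.
  - apply (two_element_family
             (fun v => sing n E v (scale L0 k) /\ Defs.PI n d r0 (scale L0 k) v /\
                       cube_sub n d (scale L0 k) (zr v) (scale L0 (S k)) (zr u))
             (sep_pair N n d (scale L0 k)) (f 0%nat) (f p)); try assumption;
      apply Hf; lia.
Qed.
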